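(* Let $\mu\in\mathcal{P}(\mathbb{R}^p)$, $\nu\in\mathcal{P}(\mathbb{R}^q)$, $E\subset\mathbb{R}^p$, $F\subset\mathbb{R}^q$ linear subspaces, and for a loss $L$ define $$GW_{E,F}(\mu,\nu)=\inf_{\gamma\in\Pi_{E,F}(\mu,\nu)}\iint L(x,x',y,y')\,\mathrm{d}\gamma(x,y)\,\mathrm{d}\gamma(x',y').$$ (i) If $L(x,x',y,y')=(\|x-x'\|_2^2-\|y-y'\|_2^2)^2$, then for every map $f:\mathbb{R}^p\to\mathbb{R}^p$ of the form $f(x)=(x_E,f_{E^\perp}(x_{E^\perp}))$ with $f_{E^\perp}$ an isometry of $E^\perp$ (in particular a translation or an orthogonal linear map of $E^\perp$), $GW_{E,F}(f_\#\mu,\nu)=GW_{E,F}(\mu,\nu)$; symmetrically for maps acting as an isometry on $F^\perp$ and as the identity on $F$ applied to $\nu$. (ii) If $L(x,x',y,y')=(\langle x,x'\rangle_p-\langle y,y'\rangle_q)^2$, the same invariance holds for every $f(x)=(x_E,f_{E^\perp}(x_{E^\perp}))$ with $f_{E^\perp}$ an orthogonal linear map of $E^\perp$ (and symmetrically on $F^\perp$).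
   Context: $\pi^E$ denotes orthogonal projection onto $E$, points are written $x=(x_E,x_{E^\perp})$ and $y=(y_F,y_{F^\perp})$. $\gamma^*_{E,F}$ denotes a fixed optimal plan for the Gromov–Wasserstein problem with loss $L$ between $\pi^E_\#\mu$ and $\pi^F_\#\nu$ (i.e. minimizing $\iint L\,\mathrm{d}\gamma\,\mathrm{d}\gamma$ over couplings); note $\pi^E_\#f_\#\mu=\pi^E_\#\mu$ for the maps considered. $\Pi_{E,F}(\mu,\nu)=\{\gamma\in\Pi(\mu,\nu):(\pi^E,\pi^F)_\#\gamma=\gamma^*_{E,F}\}$, where $\Pi(\mu,\nu)$ is the set of couplings of $\mu$ and $\nu$. *)

From HB Require Import structures.
From mathcomp Require Import all_boot all_order all_algebra.
From mathcomp Require Import all_classical all_reals all_analysis.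
Set Implicit Arguments. Unset Strict Implicit. Unset Printing Implicit Defensive.
Import Order.TTheory GRing.Theory Num.Theory.
Import numFieldNormedType.Exports.
Local Open Scope classical_set_scope.
Local Open Scope ring_scope.

(* R^p is represented by row vectors 'rV[R]_p, equipped with the Borel
   sigma-algebra generated by the open sets of the usual topology. *)
Definition Rvec (R : realType) (p : nat) :=
  g_sigma_algebraType (@open 'rV[R]_p).

Definition dotp (R : realType) (p : nat) (x y : 'rV[R]_p) : R :=
  (x *m y^T) ord0 ord0.

(* A linear subspace E of R^p is the row space of a square matrix E.
   Its orthogonal complement E^perp = {u | u E^T = 0} = row space of kermx E^T. *)
Definition perp (R : realType) (p : nat) (E : 'M[R]_p) : 'M[R]_p := kermx E^T.

Definition projE (R : realType) (p : nat) (E : 'M[R]_p) (x : 'rV[R]_p) : 'rV[R]_p :=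
  x *m proj_mx E (perp E).

Definition projEperp (R : realType) (p : nat) (E : 'M[R]_p) (x : 'rV[R]_p) :=
  x - projE E x.

Definition isometry_on_perp (R : realType) (p : nat) (E : 'M[R]_p)
    (g : 'rV[R]_p -> 'rV[R]_p) : Prop :=
  (forall u, (u <= perp E)%MS -> (g u <= perp E)%MS) /\
  (forall u v, (u <= perp E)%MS -> (v <= perp E)%MS ->
     dotp (g u - g v) (g u - g v) = dotp (u - v) (u - v)).

Definition orthogonal_linear_on_perp (R : realType) (p : nat) (E : 'M[R]_p)
    (g : 'rV[R]_p -> 'rV[R]_p) : Prop :=
  (forall u, (u <= perp E)%MS -> (g u <= perp E)%MS) /\
  (forall (a : R) u v, (u <= perp E)%MS -> (v <= perp E)%MS ->
     g (a *: u + v) = a *: g u + g v) /\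
  (forall u v, (u <= perp E)%MS -> (v <= perp E)%MS ->
     dotp (g u) (g v) = dotp u v).

Definition fmap_perp (R : realType) (p : nat) (E : 'M[R]_p)
    (g : 'rV[R]_p -> 'rV[R]_p) (x : 'rV[R]_p) : 'rV[R]_p :=
  projE E x + g (projEperp E x).

Definition push (R : realType) (T U : Type) (m : set T -> \bar R) (f : T -> U) : set U -> \bar R :=
  fun A => m (f @^-1` A).

Section GW.
Variables (R : realType) (p q : nat).
Local Notation Xp := (Rvec R p).
Local Notation Yq := (Rvec R q).

Definition L_dist (x x' : 'rV[R]_p) (y y' : 'rV[R]_q) : R :=
  (dotp (x - x') (x - x') - dotp (y - y') (y - y')) ^+ 2.
Definition L_inner (x x' : 'rV[R]_p) (y y' : 'rV[R]_q) : R :=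
  (dotp x x' - dotp y y') ^+ 2.

Definition coupling (m1 : set Xp -> \bar R) (m2 : set Yq -> \bar R)
    (gam : probability (Xp * Yq)%type R) : Prop :=
  (forall A : set Xp, measurable A -> gam (A `*` setT) = m1 A) /\
  (forall B : set Yq, measurable B -> gam (setT `*` B) = m2 B).

Definition gw_cost (L : 'rV[R]_p -> 'rV[R]_p -> 'rV[R]_q -> 'rV[R]_q -> R)
    (gam : probability (Xp * Yq)%type R) : \bar R :=
  (\int[gam]_z \int[gam]_z' (L z.1 z'.1 z.2 z'.2)%:E)%E.

Definition gw_optimal (L : 'rV[R]_p -> 'rV[R]_p -> 'rV[R]_q -> 'rV[R]_q -> R)
    (E : 'M[R]_p) (F : 'M[R]_q) (mu : set Xp -> \bar R) (nu : set Yq -> \bar R)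
    (gs : probability (Xp * Yq)%type R) : Prop :=
  coupling (push mu (projE E : Xp -> Xp)) (push nu (projE F : Yq -> Yq)) gs /\
  (forall gam, coupling (push mu (projE E : Xp -> Xp)) (push nu (projE F : Yq -> Yq)) gam ->
     (gw_cost L gs <= gw_cost L gam)%E).

Definition Pi_EF (E : 'M[R]_p) (F : 'M[R]_q) (gs : probability (Xp * Yq)%type R)
    (mu : set Xp -> \bar R) (nu : set Yq -> \bar R) :
    set (probability (Xp * Yq)%type R) :=
  [set gam | coupling mu nu gam /\
     forall A : set (Xp * Yq)%type, measurable A ->
       gam ((fun z : (Xp * Yq)%type => ((projE E z.1 : Xp), (projE F z.2 : Yq))) @^-1` A)
       = gs A].

Definition GW_EF (L : 'rV[R]_p -> 'rV[R]_p -> 'rV[R]_q -> 'rV[R]_q -> R)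
    (E : 'M[R]_p) (F : 'M[R]_q) (gs : probability (Xp * Yq)%type R)
    (mu : set Xp -> \bar R) (nu : set Yq -> \bar R) : \bar R :=
  ereal_inf [set gw_cost L gam | gam in Pi_EF E F gs mu nu].

End GW.

From HB Require Import structures.
From mathcomp Require Import all_boot all_order all_algebra.
From mathcomp Require Import all_classical all_reals all_analysis.
From mathcomp Require Import measurable_realfun.
From mathcomp Require Import ring lra zify.
Import Order.TTheory GRing.Theory Num.Theory.
Import numFieldNormedType.Exports.
Local Open Scope classical_set_scope.
Local Open Scope ring_scope.

(* The map f = (id on E) + (g on E^perp) preserves the projection onto E and,
   by Pythagoras, all distances (resp. inner products) when g is an isometry
   (resp. an orthogonal linear map) of E^perp.  Hence transporting a plan of
   Pi_{E,F}(mu, nu) by f x id gives a plan of Pi_{E,F}(f_# mu, nu) with the same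
   GW cost, so GW_{E,F}(f_# mu, nu) <= GW_{E,F}(mu, nu).  The reverse inequality
   comes from the inverse of f, which has the same form: an isometry g of E^perp
   is affine (g - g 0 preserves inner products by polarization, hence is linear)
   and onto (a rank argument on Gram matrices).  Being affine, f is also Borel
   measurable. *)

Section InnerProduct.
Context {R : realType} {p : nat}.
Implicit Types (x y z : 'rV[R]_p) (a : R).

Lemma dotpE x y : dotp x y = \sum_i x ord0 i * y ord0 i.
Proof. by rewrite /dotp !mxE; apply: eq_bigr => i _; rewrite mxE. Qed.

Lemma dotpC x y : dotp x y = dotp y x.
Proof. by rewrite !dotpE; apply: eq_bigr => i _; rewrite mulrC. Qed.

Lemma dotpDl x y z : dotp (x + y) z = dotp x z + dotp y z.
Proof. by rewrite /dotp mulmxDl mxE. Qed.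

Lemma dotpZl a x z : dotp (a *: x) z = a * dotp x z.
Proof. by rewrite /dotp -scalemxAl mxE. Qed.

Lemma dotpBl x y z : dotp (x - y) z = dotp x z - dotp y z.
Proof. by rewrite -scaleN1r dotpDl dotpZl mulN1r. Qed.

Lemma dotpDr x y z : dotp z (x + y) = dotp z x + dotp z y.
Proof. by rewrite dotpC dotpDl !(dotpC z). Qed.

Lemma dotpZr a x z : dotp z (a *: x) = a * dotp z x.
Proof. by rewrite dotpC dotpZl dotpC. Qed.

Lemma dotpBr x y z : dotp z (x - y) = dotp z x - dotp z y.
Proof. by rewrite dotpC dotpBl !(dotpC z). Qed.

Lemma dotp0l z : dotp 0 z = 0.
Proof. by rewrite /dotp mul0mx mxE. Qed.

Lemma dotp_eq0 x : (dotp x x == 0) = (x == 0).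
Proof.
apply/idP/eqP => [|->]; last by rewrite dotp0l.
rewrite dotpE psumr_eq0 => [/allP x0|i _]; last by rewrite -expr2 sqr_ge0.
apply/rowP => i; apply/eqP; rewrite mxE -sqrf_eq0 expr2.
exact: x0 (mem_index_enum i).
Qed.

Lemma dotp_subr_eq0 x y : (dotp (x - y) (x - y) == 0) = (x == y).
Proof. by rewrite dotp_eq0 subr_eq0. Qed.

Lemma dotp_polar x y x' y' :
  dotp (x - y) (x - y) = dotp (x' - y') (x' - y') ->
  dotp x x = dotp x' x' -> dotp y y = dotp y' y' -> dotp x y = dotp x' y'.
Proof.
rewrite !dotpBl !dotpBr (dotpC y x) (dotpC y' x') => exy exx eyy.
lra.
Qed.

Lemma dotp_expand a x y z :
  dotp (x - a *: y - z) (x - a *: y - z) =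
  dotp x x + a * a * dotp y y + dotp z z - 2 * a * dotp x y - 2 * dotp x z
  + 2 * a * dotp y z.
Proof.
rewrite !dotpBl !dotpBr !dotpZl !dotpZr (dotpC y x) (dotpC z x) (dotpC z y).
ring.
Qed.

End InnerProduct.

Lemma mulmx_tr_dotp (R : realType) (m k n : nat) (A : 'M[R]_(m, n))
    (B : 'M[R]_(k, n)) i j :
  (A *m B^T) i j = dotp (row i A) (row j B).
Proof. by rewrite dotpE mxE; apply: eq_bigr => l _; rewrite !mxE. Qed.

Lemma mxrank_gram (R : realType) (m n : nat) (A : 'M[R]_(m, n)) :
  \rank (A *m A^T) = \rank A.
Proof.
apply/eqP; rewrite eqn_leq mxrankM_maxl /=.
have sK : (kermx (A *m A^T) <= kermx A)%MS.
  apply/sub_kermxP/row_matrixP => i; rewrite row_mul row0.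
  apply/eqP; rewrite -dotp_eq0 /dotp trmx_mul mulmxA -(mulmxA _ A).
  by have /sub_kermxP -> := row_sub i (kermx (A *m A^T)); rewrite mul0mx mxE.
by have := mxrankS sK; rewrite !mxrank_ker; have := rank_leq_row A; lia.
Qed.

Lemma submxB {F : fieldType} {m k n : nat} [A B : 'M[F]_(m, n)] [C : 'M[F]_(k, n)] :
  (A <= C)%MS -> (B <= C)%MS -> (A - B <= C)%MS.
Proof. by move=> sAC sBC; rewrite addmx_sub // eqmx_opp. Qed.

Section OrthogonalDecomposition.
Context {R : realType} {p : nat} (E : 'M[R]_p).
Implicit Types (x y u v : 'rV[R]_p).

Lemma dotp_perp [u v] : (u <= E)%MS -> (v <= perp E)%MS -> dotp u v = 0.
Proof.
move=> /submxP[c ->] /sub_kermxP vE.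
by rewrite /dotp -mulmxA -[E *m v^T]trmxK trmx_mul trmxK vE trmx0 mulmx0 mxE.
Qed.

Lemma capmx_perp : (E :&: perp E = 0)%MS.
Proof.
apply/eqP/rowV0P => v; rewrite sub_capmx => /andP[vE vEp].
by apply/eqP; rewrite -dotp_eq0 dotp_perp.
Qed.

Lemma addsmx_perp_full x : (x <= E + perp E)%MS.
Proof.
apply: submx_full; rewrite /row_full mxrank_disjoint_sum ?capmx_perp //.
by rewrite /perp mxrank_ker mxrank_tr subnKC // rank_leq_row.
Qed.

Lemma projE_sub x : (projE E x <= E)%MS.
Proof. exact: proj_mx_sub. Qed.

Lemma projEperp_sub x : (projEperp E x <= perp E)%MS.
Proof. exact: proj_mx_compl_sub (addsmx_perp_full x). Qed.

Lemma projE_id [u] : (u <= E)%MS -> projE E u = u.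
Proof. exact/proj_mx_id/capmx_perp. Qed.

Lemma projE_perp [u] : (u <= perp E)%MS -> projE E u = 0.
Proof. exact/proj_mx_0/capmx_perp. Qed.

Lemma projED x y : projE E (x + y) = projE E x + projE E y.
Proof. exact: mulmxDl. Qed.

Lemma projE_add_perp x : projE E x + projEperp E x = x.
Proof. by rewrite /projEperp addrC subrK. Qed.

Lemma dotp_add_perp [u v u' v'] :
  (u <= E)%MS -> (v <= perp E)%MS -> (u' <= E)%MS -> (v' <= perp E)%MS ->
  dotp (u + v) (u' + v') = dotp u u' + dotp v v'.
Proof.
move=> uE vEp u'E v'Ep; rewrite dotpDl !dotpDr (dotp_perp uE v'Ep).
by rewrite (dotpC v u') (dotp_perp u'E vEp) addr0 add0r.
Qed.

Variable g : 'rV[R]_p -> 'rV[R]_p.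
Hypothesis g_perp : forall u, (u <= perp E)%MS -> (g u <= perp E)%MS.

Lemma projE_fmap_perp x : projE E (fmap_perp E g x) = projE E x.
Proof.
rewrite /fmap_perp projED.
by rewrite (projE_id (projE_sub x)) (projE_perp (g_perp _ (projEperp_sub x))) addr0.
Qed.

Lemma projEperp_fmap_perp x : projEperp E (fmap_perp E g x) = g (projEperp E x).
Proof. by rewrite /projEperp projE_fmap_perp /fmap_perp addrAC subrr add0r. Qed.

Lemma fmap_perpK gi : (forall u, (u <= perp E)%MS -> gi (g u) = u) ->
  cancel (fmap_perp E g) (fmap_perp E gi).
Proof.
move=> gK x; rewrite {1}/fmap_perp projE_fmap_perp projEperp_fmap_perp.
by rewrite gK ?projEperp_sub ?projE_add_perp.
Qed.

End OrthogonalDecomposition.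

Section PerpMaps.
Context {R : realType} {p : nat} {E : 'M[R]_p}.
Implicit Types (g : 'rV[R]_p -> 'rV[R]_p) (x u v w : 'rV[R]_p).

Lemma orthogonal_linear_on_perp0 [g] : orthogonal_linear_on_perp E g -> g 0 = 0.
Proof.
move=> [_ [g_lin _]]; apply/(addrI (g 0)); rewrite addr0.
by have := g_lin 1 0 0 (sub0mx _ _) (sub0mx _ _); rewrite scaler0 addr0 scale1r.
Qed.

Lemma orthogonal_linear_on_perp_sum [g] n (c : 'I_n -> R) (v : 'I_n -> 'rV[R]_p) :
  orthogonal_linear_on_perp E g -> (forall i, (v i <= perp E)%MS) ->
  g (\sum_i c i *: v i) = \sum_i c i *: g (v i).
Proof.
move=> gE vE; have [_ [g_lin _]] := gE.
pose P s t := (s <= perp E)%MS /\ g s = t.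
suff [] : P (\sum_i c i *: v i) (\sum_i c i *: g (v i)) by [].
apply: (big_rec2 P); first by rewrite /P sub0mx (orthogonal_linear_on_perp0 gE).
by move=> i s t _ [sE <-]; rewrite /P addmx_sub ?scalemx_sub ?g_lin.
Qed.

(* The Gram matrices of the rows of [perp E] and of their images coincide, so
   the images span a space of the same rank. *)
Lemma orthogonal_linear_on_perp_surj [g w] :
  orthogonal_linear_on_perp E g -> (w <= perp E)%MS ->
  exists2 u, (u <= perp E)%MS & g u = w.
Proof.
move=> gE wE; have [g_perp [_ g_dot]] := gE.
pose W := \matrix_(i < p) g (row i (perp E)).
have WE : (W <= perp E)%MS.
  by apply/row_subP => i; rewrite rowK g_perp ?row_sub.
have gram : W *m W^T = perp E *m (perp E)^T.
  by apply/matrixP => i j; rewrite !mulmx_tr_dotp !rowK g_dot ?row_sub.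
have EW : (perp E <= W)%MS.
  have [_ <-] := mxrank_leqif_sup WE.
  by rewrite -mxrank_gram gram mxrank_gram.
have /submxP[a ->] := submx_trans wE EW.
exists (a *m perp E); first exact: submxMl.
rewrite !mulmx_sum_row orthogonal_linear_on_perp_sum // => [|i]; last exact: row_sub.
by apply: eq_bigr => i _; rewrite rowK.
Qed.

Lemma orthogonal_linear_on_perp_mx [g] : orthogonal_linear_on_perp E g ->
  exists G : 'M[R]_p, forall x, g (projEperp E x) = x *m G.
Proof.
move=> gE; pose Q : 'M[R]_p := 1%:M - proj_mx E (perp E).
have QE x : projEperp E x = x *m Q by rewrite mulmxBr mulmx1.
have rowQ i : (row i Q <= perp E)%MS by rewrite -[Q]mul1mx row_mul -QE projEperp_sub.
exists (\matrix_i g (row i Q)) => x.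
rewrite QE !mulmx_sum_row orthogonal_linear_on_perp_sum //.
by apply: eq_bigr => i _; rewrite rowK.
Qed.

Lemma orthogonal_linear_on_perp_isometry [g] :
  orthogonal_linear_on_perp E g -> isometry_on_perp E g.
Proof.
move=> gE; have [g_perp [g_lin g_dot]] := gE; split=> // u v uE vE.
have gB : g (u - v) = g u - g v.
  by rewrite -scaleN1r addrC g_lin ?scalemx_sub // scaleN1r addrC.
by rewrite -gB g_dot ?submxB.
Qed.

(* An isometry of [perp E] fixing the origin preserves inner products by
   polarization, which forces [g (a u + v) - a g u - g v] to have norm 0. *)
Lemma isometry_on_perp_subr [g] :
  isometry_on_perp E g -> orthogonal_linear_on_perp E (fun u => g u - g 0).
Proof.
move=> [g_perp g_dist]; have E0 := sub0mx 1 (perp E).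
set h := fun u => g u - g 0.
have hB u v : h u - h v = g u - g v by rewrite /h opprB addrA subrK.
have h_dot u v : (u <= perp E)%MS -> (v <= perp E)%MS -> dotp (h u) (h v) = dotp u v.
  move=> uE vE; apply: dotp_polar; first by rewrite hB g_dist.
    by rewrite /h g_dist ?subr0.
  by rewrite /h g_dist ?subr0.
split; first by move=> u uE; rewrite submxB ?g_perp.
split=> // a u v uE vE.
have auvE : ((a *: u + v)%R <= perp E)%MS by rewrite addmx_sub ?scalemx_sub.
apply/eqP; rewrite -subr_eq0 opprD addrA -dotp_eq0 dotp_expand !h_dot //.
by rewrite -dotp_expand [a *: u + v]addrC addrK subrr dotp0l.
Qed.

Lemma isometry_on_perp_inj [g u v] : isometry_on_perp E g ->
  (u <= perp E)%MS -> (v <= perp E)%MS -> g u = g v -> u = v.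
Proof.
by move=> [_ g_dist] uE vE guv; apply/eqP; rewrite -dotp_subr_eq0 -g_dist ?guv ?subrr ?dotp0l.
Qed.

Lemma isometry_on_perp_surj [g w] : isometry_on_perp E g ->
  (w <= perp E)%MS -> exists2 u, (u <= perp E)%MS & g u = w.
Proof.
move=> gE wE; have g0E := gE.1 0 (sub0mx 1 (perp E)).
have [u uE] := orthogonal_linear_on_perp_surj (isometry_on_perp_subr gE) (submxB wE g0E).
by move=> /(congr1 (+%R^~ (g 0))); rewrite !subrK; exists u.
Qed.

Lemma isometry_on_perp_inverse [g] : isometry_on_perp E g ->
  exists gi, isometry_on_perp E gi /\ forall u, (u <= perp E)%MS -> gi (g u) = u.
Proof.
move=> gE; have [g_perp g_dist] := gE.
pose A := [set u : 'rV[R]_p | (u <= perp E)%MS].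
have g_inj : {in A &, injective g}.
  by move=> u v; rewrite !inE => uE vE; apply: isometry_on_perp_inj gE uE vE.
have g_surj : set_surj A A g.
  by move=> w /isometry_on_perp_surj-/(_ _ gE)[u uE gu]; exists u.
pose gi := 'pinv_(fun=> 0) A g.
have gi_perp w : (w <= perp E)%MS -> (gi w <= perp E)%MS.
  by move=> wE; apply: (surjpinv_image_sub g_surj); exists w.
have giK w : (w <= perp E)%MS -> g (gi w) = w.
  by move=> wE; apply: (surjpK (fun=> 0) g_surj); rewrite inE.
exists gi; split=> [|u uE]; last by apply: (pinvKV (fun=> 0) g_inj); rewrite inE.
split=> // u v uE vE.
by rewrite -(g_dist (gi u) (gi v)) ?gi_perp ?giK.
Qed.

Lemma orthogonal_linear_on_perp_inverse [g] : orthogonal_linear_on_perp E g ->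
  exists gi, orthogonal_linear_on_perp E gi /\ forall u, (u <= perp E)%MS -> gi (g u) = u.
Proof.
move=> gE; have [gi [giE gK]] := isometry_on_perp_inverse (orthogonal_linear_on_perp_isometry gE).
exists gi; split=> //.
have gi0 : gi 0 = 0 by rewrite -{1}(orthogonal_linear_on_perp0 gE) gK ?sub0mx.
have -> : gi = (fun u => gi u - gi 0) by apply/funext => u; rewrite gi0 subr0.
exact: isometry_on_perp_subr.
Qed.

End PerpMaps.

Section FmapPerp.
Context {R : realType} {p : nat} {E : 'M[R]_p}.
Implicit Types (g : 'rV[R]_p -> 'rV[R]_p) (x : 'rV[R]_p).

Lemma dotp_fmap_perp [g] x x' : orthogonal_linear_on_perp E g ->
  dotp (fmap_perp E g x) (fmap_perp E g x') = dotp x x'.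
Proof.
move=> [g_perp [_ g_dot]].
rewrite /fmap_perp -[in RHS](projE_add_perp E x) -[in RHS](projE_add_perp E x').
have [xE x'E] := (projEperp_sub E x, projEperp_sub E x').
rewrite (dotp_add_perp E (projE_sub E x) (g_perp _ xE) (projE_sub E x') (g_perp _ x'E)).
by rewrite (dotp_add_perp E (projE_sub E x) xE (projE_sub E x') x'E) g_dot.
Qed.

Lemma dist_fmap_perp [g] x x' : isometry_on_perp E g ->
  dotp (fmap_perp E g x - fmap_perp E g x') (fmap_perp E g x - fmap_perp E g x')
  = dotp (x - x') (x - x').
Proof.
move=> [g_perp g_dist].
have [xE x'E] := (projEperp_sub E x, projEperp_sub E x').
have -> : x - x' = (projE E x - projE E x') + (projEperp E x - projEperp E x').
  by rewrite [RHS]addrACA -opprD !projE_add_perp.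
rewrite /fmap_perp opprD addrACA.
have dE := submxB (projE_sub E x) (projE_sub E x').
have dgE := submxB (g_perp _ xE) (g_perp _ x'E).
rewrite (dotp_add_perp E dE dgE dE dgE).
by rewrite (dotp_add_perp E dE (submxB xE x'E) dE (submxB xE x'E)) g_dist.
Qed.

Lemma fmap_perp_affine [g] : isometry_on_perp E g ->
  exists (M : 'M[R]_p) (c : 'rV[R]_p), fmap_perp E g = fun x => x *m M + c.
Proof.
move=> gE; have [G gG] := orthogonal_linear_on_perp_mx (isometry_on_perp_subr gE).
exists (proj_mx E (perp E) + G), (g 0); apply/funext => x.
by rewrite mulmxDr /fmap_perp -gG addrA subrK.
Qed.

Lemma isometry_fmap_perp_inverse [g] : isometry_on_perp E g ->
  exists gi, isometry_on_perp E gi /\ cancel (fmap_perp E g) (fmap_perp E gi).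
Proof.
move=> gE; have [gi [giE gK]] := isometry_on_perp_inverse gE.
by exists gi; split=> //; apply: fmap_perpK gK; case: gE.
Qed.

Lemma orthogonal_fmap_perp_inverse [g] : orthogonal_linear_on_perp E g ->
  exists gi, orthogonal_linear_on_perp E gi /\ cancel (fmap_perp E g) (fmap_perp E gi).
Proof.
move=> gE; have [gi [giE gK]] := orthogonal_linear_on_perp_inverse gE.
by exists gi; split=> //; apply: fmap_perpK gK; case: gE.
Qed.

End FmapPerp.

Lemma mx_continuous {K : numFieldType} {T : topologicalType} {m n : nat}
    (f : T -> 'M[K]_(m, n)) :
  (forall i j, continuous (fun x => f x i j)) -> continuous f.
Proof.
move=> fc x A [P Pn sPA].
have : \forall y \near x, forall i j, P i j (f y i j).
  by apply: filter_forall => i; apply: filter_forall => j; exact: fc.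
by apply: filterS => y Py; apply: sPA.
Qed.

Lemma sum_continuous {K : numFieldType} {T : topologicalType} (I : Type) (s : seq I)
    (F : I -> T -> K) :
  (forall i, continuous (F i)) -> continuous (fun x => \sum_(i <- s) F i x).
Proof.
move=> Fc; elim: s => [|i s IH].
  by under eq_fun do rewrite big_nil; exact: cst_continuous.
under eq_fun do rewrite big_cons.
by move=> x; apply: continuousD; [exact: Fc | exact: IH].
Qed.

Section Measurability.
Context {R : realType} {p : nat}.

Lemma affine_continuous (M : 'M[R]_p) (c : 'rV[R]_p) :
  continuous (fun x : 'rV[R]_p => x *m M + c).
Proof.
apply: mx_continuous => i j; under eq_fun do rewrite !mxE.
move=> x; apply: continuousD; last exact: cst_continuous.
apply: sum_continuous => k y; apply: continuousM; last exact: cst_continuous.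
exact: coord_continuous.
Qed.

Lemma measurable_affine (M : 'M[R]_p) (c : 'rV[R]_p) :
  measurable_fun setT (fun x : Rvec R p => x *m M + c : Rvec R p).
Proof.
apply: (@measurability _ _ (Rvec R p) (Rvec R p) setT _ (@open 'rV[R]_p) erefl).
move=> _ [B oB <-].
apply: sub_sigma_algebra; rewrite setTI.
by apply: open_comp => // x _; exact: affine_continuous.
Qed.

Lemma measurable_coord (k : 'I_p) : measurable_fun setT (fun x : Rvec R p => x ord0 k).
Proof.
apply: (@measurability _ _ _ _ _ _ (@RGenOpens.G R) (RGenOpens.measurableE R)).
move=> _ [_ [a [b ->]] <-].
apply: sub_sigma_algebra; apply: openI; first exact: openT.
by apply: open_comp; [move=> x _; exact: coord_continuous | exact: itv_open].
Qed.

Lemma measurable_coord_comp d (T : measurableType d) (f : T -> Rvec R p) k :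
  measurable_fun setT f -> measurable_fun setT (fun t => f t ord0 k).
Proof. exact: measurableT_comp (measurable_coord k). Qed.

Lemma measurable_dotp d (T : measurableType d) (a b : T -> 'rV[R]_p) :
  (forall k, measurable_fun setT (fun t => a t ord0 k)) ->
  (forall k, measurable_fun setT (fun t => b t ord0 k)) ->
  measurable_fun setT (fun t => dotp (a t) (b t)).
Proof.
move=> ma mb; under eq_fun do rewrite dotpE.
by apply: measurable_sum => k; apply: measurable_funM.
Qed.

Lemma measurable_fmap_perp (E : 'M[R]_p) g : isometry_on_perp E g ->
  measurable_fun setT (fmap_perp E g : Rvec R p -> Rvec R p).
Proof. by move=> /fmap_perp_affine[M [c ->]]; exact: measurable_affine. Qed.

End Measurability.

Definition gw_symmetry {R : realType} {p q : nat}
    (L : 'rV[R]_p -> 'rV[R]_p -> 'rV[R]_q -> 'rV[R]_q -> R)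
    (E : 'M[R]_p) (F : 'M[R]_q) (phi : Rvec R p -> Rvec R p) (psi : Rvec R q -> Rvec R q) :=
  [/\ measurable_fun setT phi, measurable_fun setT psi,
      forall x, projE E (phi x) = projE E x, forall y, projE F (psi y) = projE F y &
      forall x x' y y', L (phi x) (phi x') (psi y) (psi y') = L x x' y y'].

Section GWPushforward.
Context {R : realType} {p q : nat}.
Local Notation X := (Rvec R p).
Local Notation Y := (Rvec R q).
Context {L : 'rV[R]_p -> 'rV[R]_p -> 'rV[R]_q -> 'rV[R]_q -> R}
  {E : 'M[R]_p} {F : 'M[R]_q} {gs : probability (X * Y)%type R}.
Hypothesis L_ge0 : forall x x' y y', 0 <= L x x' y y'.
Hypothesis measurable_L : measurable_fun setT
  (fun zz : ((X * Y) * (X * Y))%type => (L zz.1.1 zz.2.1 zz.1.2 zz.2.2)%:E).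

Lemma gw_cost_distribution (Phi : {mfun (X * Y)%type >-> (X * Y)%type})
    (gam : probability (X * Y)%type R) :
  (forall z z', L (Phi z).1 (Phi z').1 (Phi z).2 (Phi z').2 = L z.1 z'.1 z.2 z'.2) ->
  gw_cost L (distribution gam Phi) = gw_cost L gam.
Proof.
move=> L_Phi.
pose f (zz : ((X * Y) * (X * Y))%type) := (L zz.1.1 zz.2.1 zz.1.2 zz.2.2)%:E.
have f_ge0 zz : (0 <= f zz)%E by rewrite lee_fin.
rewrite /gw_cost.
have -> : (fun z => \int[distribution gam Phi]_z' (L z.1 z'.1 z.2 z'.2)%:E)%E =
    fubini_F (distribution gam Phi) f by [].
rewrite ge0_integral_distribution; last 2 first.
- exact: measurable_fun_fubini_tonelli_F.
- by move=> z; exact: integral_ge0.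
apply: eq_integral => z _ /=; rewrite /fubini_F ge0_integral_distribution //.
  by apply: eq_integral => z' _ /=; rewrite /f /= L_Phi.
exact: measurable_fun_pair2.
Qed.

Lemma Pi_EF_distribution (m : set X -> \bar R) (n : set Y -> \bar R)
    (phi : X -> X) (psi : Y -> Y) (Phi : {mfun (X * Y)%type >-> (X * Y)%type})
    (gam : probability (X * Y)%type R) :
  measurable_fun setT phi -> measurable_fun setT psi ->
  (forall x, projE E (phi x) = projE E x) -> (forall y, projE F (psi y) = projE F y) ->
  (forall z, Phi z = (phi z.1, psi z.2)) ->
  Pi_EF E F gs m n gam -> Pi_EF E F gs (push m phi) (push n psi) (distribution gam Phi).
Proof.
move=> mphi mpsi phiE psiF PhiE [[gam_m gam_n] gam_gs].
have PhiV A B : Phi @^-1` (A `*` B) = (phi @^-1` A) `*` (psi @^-1` B).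
  by apply/funext => z; rewrite /preimage /= PhiE.
split; first split.
- move=> A mA; rewrite /push -gam_m; last by rewrite -[_ @^-1` _]setTI; apply: mphi.
  by rewrite -[in RHS](preimage_setT psi) -PhiV.
- move=> B mB; rewrite /push -gam_n; last by rewrite -[_ @^-1` _]setTI; apply: mpsi.
  by rewrite -[in RHS](preimage_setT phi) -PhiV.
- move=> A mA; rewrite -gam_gs //; congr (gam _).
  by apply/funext => z; rewrite /preimage /= PhiE phiE psiF.
Qed.

Lemma GW_EF_push_le (m : set X -> \bar R) (n : set Y -> \bar R) phi psi :
  gw_symmetry L E F phi psi -> (GW_EF L E F gs (push m phi) (push n psi) <= GW_EF L E F gs m n)%E.
Proof.
move=> [mphi mpsi phiE psiF L_sym].
have mPhi : measurable_fun setT (fun z : (X * Y)%type => (phi z.1, psi z.2)).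
  by apply: measurable_fun_pair; apply: measurableT_comp.
pose Phi : {mfun _ >-> _} := HB.pack (fun z : (X * Y)%type => (phi z.1, psi z.2))
  (isMeasurableFun.Build _ _ _ _ _ mPhi).
apply: ereal_inf_le_tmp => _ [gam gamPi <-]; exists (distribution gam Phi).
  exact: Pi_EF_distribution.
by apply: gw_cost_distribution => z z'; exact: L_sym.
Qed.

Lemma GW_EF_push [m : set X -> \bar R] [n : set Y -> \bar R] [phi phi' psi psi'] :
  gw_symmetry L E F phi psi -> gw_symmetry L E F phi' psi' -> cancel phi phi' -> cancel psi psi' ->
  GW_EF L E F gs (push m phi) (push n psi) = GW_EF L E F gs m n.
Proof.
move=> sym sym' phiK psiK; apply/eqP; rewrite eq_le GW_EF_push_le //=.
have pushK T (k : set T -> \bar R) (f f' : T -> T) : cancel f f' -> push (push k f) f' = k.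
  by move=> fK; apply/funext => A; congr k; apply/funext => x; rewrite /preimage /= fK.
by rewrite -{1}(pushK _ m _ _ phiK) -{1}(pushK _ n _ _ psiK) GW_EF_push_le.
Qed.

End GWPushforward.

Section Losses.
Context {R : realType} {p q : nat}.
Local Notation XY := (Rvec R p * Rvec R q)%type.

Local Ltac measurable_component :=
  apply: measurable_coord_comp; apply: measurableT_comp;
  (exact: measurable_fst || exact: measurable_snd).

Lemma measurable_L_dist : measurable_fun setT
  (fun zz : (XY * XY)%type => (@L_dist R p q zz.1.1 zz.2.1 zz.1.2 zz.2.2)%:E).
Proof.
apply/measurable_EFinP; apply: measurable_funX; apply: measurable_funB;
  apply: measurable_dotp => k; under eq_fun do rewrite !mxE;
  by apply: measurable_funB; measurable_component.
Qed.

Lemma measurable_L_inner : measurable_fun setT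
  (fun zz : (XY * XY)%type => (@L_inner R p q zz.1.1 zz.2.1 zz.1.2 zz.2.2)%:E).
Proof.
apply/measurable_EFinP; apply: measurable_funX; apply: measurable_funB;
  by apply: measurable_dotp => k; measurable_component.
Qed.

End Losses.

Section Symmetries.
Context {R : realType} {p q : nat} {E : 'M[R]_p} {F : 'M[R]_q}.

Lemma gw_symmetry_dist_l [g] : isometry_on_perp E g ->
  gw_symmetry (@L_dist R p q) E F (fmap_perp E g) id.
Proof.
move=> gE; split=> //; first exact: measurable_fmap_perp.
  exact: projE_fmap_perp gE.1.
by move=> x x' y y'; rewrite /L_dist dist_fmap_perp.
Qed.

Lemma gw_symmetry_dist_r [h] : isometry_on_perp F h ->
  gw_symmetry (@L_dist R p q) E F id (fmap_perp F h).
Proof.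
move=> hF; split=> //; first exact: measurable_fmap_perp.
  exact: projE_fmap_perp hF.1.
by move=> x x' y y'; rewrite /L_dist dist_fmap_perp.
Qed.

Lemma gw_symmetry_inner_l [g] : orthogonal_linear_on_perp E g ->
  gw_symmetry (@L_inner R p q) E F (fmap_perp E g) id.
Proof.
move=> gE; split=> //.
- exact: measurable_fmap_perp (orthogonal_linear_on_perp_isometry _).
- exact: projE_fmap_perp gE.1.
- by move=> x x' y y'; rewrite /L_inner dotp_fmap_perp.
Qed.

Lemma gw_symmetry_inner_r [h] : orthogonal_linear_on_perp F h ->
  gw_symmetry (@L_inner R p q) E F id (fmap_perp F h).
Proof.
move=> hF; split=> //.
- exact: measurable_fmap_perp (orthogonal_linear_on_perp_isometry _).
- exact: projE_fmap_perp hF.1.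
- by move=> x x' y y'; rewrite /L_inner dotp_fmap_perp.
Qed.

End Symmetries.

Theorem proposition2 (R : realType) (p q : nat)
    (mu : probability (Rvec R p) R) (nu : probability (Rvec R q) R)
    (E : 'M[R]_p) (F : 'M[R]_q) :
  (forall gs : probability (Rvec R p * Rvec R q)%type R,
     gw_optimal (@L_dist R p q) E F mu nu gs ->
     (forall g : 'rV[R]_p -> 'rV[R]_p, isometry_on_perp E g ->
        GW_EF (@L_dist R p q) E F gs
          (push mu (fmap_perp E g : Rvec R p -> Rvec R p)) nu
        = GW_EF (@L_dist R p q) E F gs mu nu) /\
     (forall h : 'rV[R]_q -> 'rV[R]_q, isometry_on_perp F h ->
        GW_EF (@L_dist R p q) E F gs mu
          (push nu (fmap_perp F h : Rvec R q -> Rvec R q))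
        = GW_EF (@L_dist R p q) E F gs mu nu)) /\
  (forall gs : probability (Rvec R p * Rvec R q)%type R,
     gw_optimal (@L_inner R p q) E F mu nu gs ->
     (forall g : 'rV[R]_p -> 'rV[R]_p, orthogonal_linear_on_perp E g ->
        GW_EF (@L_inner R p q) E F gs
          (push mu (fmap_perp E g : Rvec R p -> Rvec R p)) nu
        = GW_EF (@L_inner R p q) E F gs mu nu) /\
     (forall h : 'rV[R]_q -> 'rV[R]_q, orthogonal_linear_on_perp F h ->
        GW_EF (@L_inner R p q) E F gs mu
          (push nu (fmap_perp F h : Rvec R q -> Rvec R q))
        = GW_EF (@L_inner R p q) E F gs mu nu)).
Proof.
have L_dist_ge0 x x' y y' : 0 <= @L_dist R p q x x' y y' by exact: sqr_ge0.
have L_inner_ge0 x x' y y' : 0 <= @L_inner R p q x x' y y' by exact: sqr_ge0.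
have idK T : cancel (@id T) id by [].
split=> gs _; split=> [g gE | h hF].
- have [gi [giE gK]] := isometry_fmap_perp_inverse gE.
  exact: (GW_EF_push L_dist_ge0 measurable_L_dist
    (gw_symmetry_dist_l gE) (gw_symmetry_dist_l giE) gK (idK _)).
- have [hi [hiF hK]] := isometry_fmap_perp_inverse hF.
  exact: (GW_EF_push L_dist_ge0 measurable_L_dist
    (gw_symmetry_dist_r hF) (gw_symmetry_dist_r hiF) (idK _) hK).
- have [gi [giE gK]] := orthogonal_fmap_perp_inverse gE.
  exact: (GW_EF_push L_inner_ge0 measurable_L_inner
    (gw_symmetry_inner_l gE) (gw_symmetry_inner_l giE) gK (idK _)).
- have [hi [hiF hK]] := orthogonal_fmap_perp_inverse hF.
  exact: (GW_EF_push L_inner_ge0 measurable_L_inner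
    (gw_symmetry_inner_r hF) (gw_symmetry_inner_r hiF) (idK _) hK).
Qed.
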